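(* Let $S$ be a nonelementary hyperbolic surface with at least one cusp. Then every vector $u\in T^1S$ whose forward geodesic orbit $\{g_tu: t\ge0\}$ is dense in the nonwandering set $\mathrm{NW}(g_t)$ of the geodesic flow is cusp-recurrent.
   Context: $S=\Gamma\backslash\mathbb H$ with $\Gamma$ a torsion-free Fuchsian group; $g_t$ is the geodesic flow on $T^1S$, and for $u\in T^1S$, $u(t)$ denotes the basepoint of $g_tu$. $\mathrm{NW}(g_t)$ is the set of nonwandering vectors of $g_t$. A closed horocycle in $S$ is the projection of a horocycle in $\mathbb H$ centered at the fixed point of a parabolic element of $\Gamma$. A vector $u\in T^1S$ is cusp-recurrent if the geodesic ray $u(\mathbb R^+)$ does not escape to infinity through a cusp (equivalently, for a lift $\tilde u$, $\tilde u(+\infty)$ is not fixed by a parabolic element of $\Gamma$) and there exist closed horocycles $H_n$ in $S$ with lengths tending to $0$ and times $t_n\ge0$ with $u(t_n)\in H_n$. *)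

(* Model: T^1 H is identified with PSL(2,R) via g |-> the unit vector at g.i
   pointing along g.(i e^t); we work with SL(2,R) matrices and represent a
   Fuchsian group Gamma < PSL(2,R) by its full preimage in SL(2,R) (so -I is in
   Gamma).  Then T^1 S = Gamma \ SL(2,R), the geodesic flow is right
   multiplication by a_t = diag(e^{t/2}, e^{-t/2}), the basepoint of g is g.i
   and the forward endpoint g(+oo) is g.oo = [a : c]. *)
From Stdlib Require Import Reals List.
Open Scope R_scope.

Record mat := Mat { ma : R; mb : R; mc : R; md : R }.

Definition mmul (g h : mat) : mat :=
  Mat (ma g * ma h + mb g * mc h) (ma g * mb h + mb g * md h)
      (mc g * ma h + md g * mc h) (mc g * mb h + md g * md h).

Definition mdet (g : mat) : R := ma g * md g - mb g * mc g.
Definition mI : mat := Mat 1 0 0 1.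
Definition mnegI : mat := Mat (-1) 0 0 (-1).
(* inverse of a determinant-one matrix *)
Definition minv (g : mat) : mat := Mat (md g) (- mb g) (- mc g) (ma g).
Fixpoint mpow (g : mat) (n : nat) : mat :=
  match n with O => mI | S k => mmul g (mpow g k) end.

Definition SL2 (g : mat) : Prop := mdet g = 1.

Definition mdist (g h : mat) : R :=
  Rmax (Rmax (Rabs (ma g - ma h)) (Rabs (mb g - mb h)))
       (Rmax (Rabs (mc g - mc h)) (Rabs (md g - md h))).

Definition a_t (t : R) : mat := Mat (exp (t / 2)) 0 0 (exp (- t / 2)).
Definition gflow (t : R) (g : mat) : mat := mmul g (a_t t).

Definition transl (s : R) : mat := Mat 1 s 0 1.

(* imaginary part of g . i for g in SL(2,R) *)
Definition im_at_i (g : mat) : R := / (mc g ^ 2 + md g ^ 2).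

Definition parabolic (p : mat) : Prop :=
  p <> mI /\ p <> mnegI /\ (ma p + md p) ^ 2 = 4.

(* p fixes the boundary point [x : y] of P^1(R) *)
Definition fixes_bd (p : mat) (x y : R) : Prop :=
  (ma p * x + mb p * y) * y - (mc p * x + md p * y) * x = 0.

(* points of the closure of H: interior x + iy, or boundary [p : q] *)
Inductive hpt := Inn (x y : R) | Bd (p q : R).

Definition valid_hpt (z : hpt) : Prop :=
  match z with Inn _ y => 0 < y | Bd p q => ~ (p = 0 /\ q = 0) end.

Definition same_hpt (z w : hpt) : Prop :=
  match z, w with
  | Inn x y, Inn x' y' => x = x' /\ y = y'
  | Bd p q, Bd p' q' => p * q' = p' * q
  | _, _ => False
  end.

(* Moebius action of a determinant-one matrix on the closure of H *)
Definition act (g : mat) (z : hpt) : hpt :=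
  match z with
  | Inn x y =>
      let n := (mc g * x + md g) ^ 2 + (mc g * y) ^ 2 in
      Inn (((ma g * x + mb g) * (mc g * x + md g) + ma g * mc g * y ^ 2) / n)
          (y / n)
  | Bd p q => Bd (ma g * p + mb g * q) (mc g * p + md g * q)
  end.

Record torsion_free_fuchsian (Gam : mat -> Prop) : Prop := {
  fu_SL2 : forall g, Gam g -> SL2 g;
  fu_one : Gam mI;
  fu_negI : Gam mnegI;
  fu_mul : forall g h, Gam g -> Gam h -> Gam (mmul g h);
  fu_inv : forall g, Gam g -> Gam (minv g);
  fu_discrete : exists eps, 0 < eps /\
      forall g, Gam g -> mdist g mI < eps -> g = mI;
  fu_torsion_free : forall g n, Gam g -> (0 < n)%nat ->
      (mpow g n = mI \/ mpow g n = mnegI) -> g = mI \/ g = mnegI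
}.

Definition elementary (Gam : mat -> Prop) : Prop :=
  exists s : list hpt, s <> nil /\ Forall valid_hpt s /\
    forall g z, Gam g -> In z s -> exists w, In w s /\ same_hpt (act g z) w.

Definition has_cusp (Gam : mat -> Prop) : Prop :=
  exists p, Gam p /\ parabolic p.

Definition nonwandering (Gam : mat -> Prop) (v : mat) : Prop :=
  SL2 v /\
  forall eps T, 0 < eps -> exists t w g, T <= t /\ Gam g /\ SL2 w /\
    mdist w v < eps /\ mdist (mmul g (gflow t w)) v < eps.

Definition forward_orbit_dense_in_NW (Gam : mat -> Prop) (u : mat) : Prop :=
  (forall t, 0 <= t -> nonwandering Gam (gflow t u)) /\
  forall w, nonwandering Gam w -> forall eps, 0 < eps ->
    exists t g, 0 <= t /\ Gam g /\ mdist (mmul g (gflow t u)) w < eps.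

(* A closed horocycle in S: projection of the horocycle
   { g.z : Im z = y } centered at g.oo, where g (transl tau) g^-1 generates
   the parabolic stabilizer of g.oo in Gamma (tau > 0 minimal). *)
Definition closed_horocycle (Gam : mat -> Prop) (g : mat) (y tau : R) : Prop :=
  SL2 g /\ 0 < y /\ 0 < tau /\
  Gam (mmul g (mmul (transl tau) (minv g))) /\
  forall s, 0 < s < tau -> ~ Gam (mmul g (mmul (transl s) (minv g))).

Definition horocycle_length (y tau : R) : R := tau / y.

Definition on_horocycle (Gam : mat -> Prop) (g : mat) (y : R) (h : mat) : Prop :=
  exists gam, Gam gam /\ im_at_i (mmul (minv g) (mmul gam h)) = y.

Definition cusp_recurrent (Gam : mat -> Prop) (u : mat) : Prop :=
  (~ exists p, Gam p /\ parabolic p /\ fixes_bd p (ma u) (mc u)) /\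
  exists (g : nat -> mat) (y tau t : nat -> R),
    (forall n, closed_horocycle Gam (g n) (y n) (tau n) /\ 0 <= t n /\
       on_horocycle Gam (g n) (y n) (gflow (t n) u)) /\
    Un_cv (fun n => horocycle_length (y n) (tau n)) 0.

(* Fix a cusp and a frame g in which its stabiliser contains z |-> z + 1.
   Since Gamma is non-elementary, g^-1 Gamma g contains elements T^n gam of
   arbitrarily large trace, whose axes climb arbitrarily high into the cusp;
   their periodic orbits are nonwandering.  A forward orbit dense in NW(g_t)
   therefore climbs arbitrarily high, i.e. it meets closed horocycles whose
   lengths tend to 0.  It cannot escape through a cusp: if u(+oo) = g.oo, the
   lower-left entry of g^-1 gam g_t u is c(g^-1 gam g) (g^-1 u)_11 e^(t/2),
   which by Shimizu's lemma is either 0 or at least |(g^-1 u)_11| / 4, whereas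
   approaching a periodic vector high in the cusp forces it to be small and
   nonzero. *)

From Stdlib Require Import Reals Lra Psatz Classical ClassicalEpsilon.
Open Scope R_scope.

Ltac mat_unfold :=
  repeat match goal with X : mat |- _ => destruct X end;
  unfold SL2, mmul, minv, mdet, mI, mnegI, transl, a_t, gflow in *; cbn [ma mb mc md] in *.

Lemma mmul_assoc X Y Z : mmul (mmul X Y) Z = mmul X (mmul Y Z).
Proof. mat_unfold; f_equal; ring. Qed.

Lemma mmul_1l X : mmul mI X = X.
Proof. mat_unfold; f_equal; ring. Qed.

Lemma mmul_1r X : mmul X mI = X.
Proof. mat_unfold; f_equal; ring. Qed.

Lemma mmul_minv_l X : SL2 X -> mmul (minv X) X = mI.
Proof. mat_unfold; intro; f_equal; lra. Qed.

Lemma mmul_minv_r X : SL2 X -> mmul X (minv X) = mI.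
Proof. mat_unfold; intro; f_equal; lra. Qed.

Lemma minv_mmul X Y : minv (mmul X Y) = mmul (minv Y) (minv X).
Proof. mat_unfold; f_equal; ring. Qed.

Lemma minvK X : minv (minv X) = X.
Proof. mat_unfold; f_equal; ring. Qed.

Lemma SL2_mmul X Y : SL2 X -> SL2 Y -> SL2 (mmul X Y).
Proof. mat_unfold; intros HX HY; nra. Qed.

Lemma SL2_minv X : SL2 X -> SL2 (minv X).
Proof. mat_unfold; intro; lra. Qed.

Lemma SL2_a_t t : SL2 (a_t t).
Proof.
  mat_unfold. rewrite Rmult_0_r, Rminus_0_r, <- exp_plus, <- exp_0; f_equal; field.
Qed.

Lemma a_t_add s t : a_t (s + t) = mmul (a_t s) (a_t t).
Proof.
  mat_unfold; f_equal; rewrite ?Rmult_0_l, ?Rmult_0_r, ?Rplus_0_l, ?Rplus_0_r; trivial.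
  all: rewrite <- exp_plus; f_equal; field.
Qed.

Lemma a_t_0 : a_t 0 = mI.
Proof. unfold a_t, mI; f_equal; rewrite <- exp_0; f_equal; field. Qed.

Lemma a_t_2ln l : 0 < l -> a_t (2 * ln l) = Mat l 0 0 (/ l).
Proof.
  intro Hl; unfold a_t; f_equal.
  - replace (2 * ln l / 2) with (ln l) by field; apply exp_ln; lra.
  - replace (- (2 * ln l) / 2) with (- ln l) by field; rewrite exp_Ropp, exp_ln; lra.
Qed.

Lemma gflow_add s t w : gflow (s + t) w = gflow t (gflow s w).
Proof. unfold gflow; rewrite a_t_add, mmul_assoc; reflexivity. Qed.

Lemma gflow_0 w : gflow 0 w = w.
Proof. unfold gflow; rewrite a_t_0; apply mmul_1r. Qed.

Lemma mmul_gflow X t w : mmul X (gflow t w) = gflow t (mmul X w).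
Proof. unfold gflow; rewrite mmul_assoc; reflexivity. Qed.

Lemma SL2_gflow t w : SL2 w -> SL2 (gflow t w).
Proof. intro; apply SL2_mmul; auto using SL2_a_t. Qed.

Lemma transl_add s t : transl (s + t) = mmul (transl s) (transl t).
Proof. mat_unfold; f_equal; ring. Qed.

Lemma minv_transl s : minv (transl s) = transl (- s).
Proof. mat_unfold; f_equal; ring. Qed.

Lemma transl_0 : transl 0 = mI.
Proof. reflexivity. Qed.

Lemma SL2_transl s : SL2 (transl s).
Proof. mat_unfold; ring. Qed.

Lemma conj_transl X s : SL2 X -> mmul X (mmul (transl s) (minv X)) =
  Mat (1 - s * ma X * mc X) (s * ma X ^ 2) (- s * mc X ^ 2) (1 + s * ma X * mc X).
Proof. mat_unfold; intro; f_equal; lra. Qed.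

Lemma SL2_bottom_row_pos X : SL2 X -> 0 < mc X ^ 2 + md X ^ 2.
Proof.
  unfold SL2, mdet; intro H.
  destruct (Req_dec (mc X) 0) as [Hc | Hc]; [|nra].
  rewrite Hc in H; assert (md X <> 0) by (intro Hd; rewrite Hd in H; lra); nra.
Qed.

Definition mnorm (X : mat) : R :=
  Rmax (Rmax (Rabs (ma X)) (Rabs (mb X))) (Rmax (Rabs (mc X)) (Rabs (md X))).

Lemma mdist_le X Y e :
  Rabs (ma X - ma Y) <= e -> Rabs (mb X - mb Y) <= e ->
  Rabs (mc X - mc Y) <= e -> Rabs (md X - md Y) <= e -> mdist X Y <= e.
Proof. intros; unfold mdist; repeat apply Rmax_lub; auto. Qed.

Lemma mdist_entries X Y :
  Rabs (ma X - ma Y) <= mdist X Y /\ Rabs (mb X - mb Y) <= mdist X Y /\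
  Rabs (mc X - mc Y) <= mdist X Y /\ Rabs (md X - md Y) <= mdist X Y.
Proof.
  unfold mdist; repeat split;
    solve [eapply Rle_trans; [|apply Rmax_l]; solve [apply Rmax_l | apply Rmax_r]
          | eapply Rle_trans; [|apply Rmax_r]; solve [apply Rmax_l | apply Rmax_r]].
Qed.

Lemma mnorm_entries X :
  Rabs (ma X) <= mnorm X /\ Rabs (mb X) <= mnorm X /\
  Rabs (mc X) <= mnorm X /\ Rabs (md X) <= mnorm X.
Proof.
  unfold mnorm; repeat split;
    solve [eapply Rle_trans; [|apply Rmax_l]; solve [apply Rmax_l | apply Rmax_r]
          | eapply Rle_trans; [|apply Rmax_r]; solve [apply Rmax_l | apply Rmax_r]].
Qed.

Lemma mnorm_nonneg X : 0 <= mnorm X.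
Proof. eapply Rle_trans; [apply Rabs_pos|apply mnorm_entries]. Qed.

Lemma mdist_nonneg X Y : 0 <= mdist X Y.
Proof. eapply Rle_trans; [apply Rabs_pos|apply mdist_entries]. Qed.

Lemma mdist_refl X : mdist X X = 0.
Proof. unfold mdist; rewrite !Rminus_diag, Rabs_R0, !Rmax_left; lra. Qed.

Lemma mnorm_minv X : mnorm (minv X) = mnorm X.
Proof.
  destruct (mnorm_entries X) as (? & ? & ? & ?).
  destruct (mnorm_entries (minv X)) as (? & ? & ? & ?).
  unfold minv in *; cbn [ma mb mc md] in *; rewrite !Rabs_Ropp in *.
  apply Rle_antisym; unfold mnorm at 1; cbn [ma mb mc md]; rewrite ?Rabs_Ropp;
    repeat apply Rmax_lub; assumption.
Qed.

Lemma Rabs_lincomb2 p q x y N e :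
  Rabs p <= N -> Rabs q <= N -> Rabs x <= e -> Rabs y <= e ->
  Rabs (p * x + q * y) <= 2 * N * e.
Proof.
  intros Hp Hq Hx Hy.
  pose proof (Rabs_triang (p * x) (q * y)); rewrite !Rabs_mult in *.
  assert (Rabs p * Rabs x <= N * e) by (apply Rmult_le_compat; auto using Rabs_pos).
  assert (Rabs q * Rabs y <= N * e) by (apply Rmult_le_compat; auto using Rabs_pos).
  lra.
Qed.

Lemma mdist_mmul_l A X Y : mdist (mmul A X) (mmul A Y) <= 2 * mnorm A * mdist X Y.
Proof.
  destruct (mnorm_entries A) as (Ha & Hb & Hc & Hd).
  destruct (mdist_entries X Y) as (Ea & Eb & Ec & Ed).
  apply mdist_le; unfold mmul; cbn [ma mb mc md].
  all: match goal with |- Rabs (?p * ?x + ?q * ?y - (?p * ?x' + ?q * ?y')) <= _ =>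
         replace (p * x + q * y - (p * x' + q * y')) with (p * (x - x') + q * (y - y')) by ring
       end; apply Rabs_lincomb2; assumption.
Qed.

Lemma mdist_mmul_r A X Y : mdist (mmul X A) (mmul Y A) <= 2 * mnorm A * mdist X Y.
Proof.
  destruct (mnorm_entries A) as (Ha & Hb & Hc & Hd).
  destruct (mdist_entries X Y) as (Ea & Eb & Ec & Ed).
  apply mdist_le; unfold mmul; cbn [ma mb mc md].
  all: match goal with |- Rabs (?x * ?p + ?y * ?q - (?x' * ?p + ?y' * ?q)) <= _ =>
         replace (x * p + y * q - (x' * p + y' * q)) with (p * (x - x') + q * (y - y')) by ring
       end; apply Rabs_lincomb2; assumption.
Qed.

Record discrete_subgroup (G : mat -> Prop) : Prop := {
  ds_SL2 : forall g, G g -> SL2 g;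
  ds_one : G mI;
  ds_mul : forall g h, G g -> G h -> G (mmul g h);
  ds_inv : forall g, G g -> G (minv g);
  ds_discrete : exists eps, 0 < eps /\ forall g, G g -> mdist g mI < eps -> g = mI
}.

Lemma fuchsian_discrete_subgroup G : torsion_free_fuchsian G -> discrete_subgroup G.
Proof. intros []; constructor; auto. Qed.

Definition conjugate (G : mat -> Prop) (g : mat) : mat -> Prop :=
  fun X => G (mmul g (mmul X (minv g))).

Lemma conjugate_mem G g gam : SL2 g -> G gam -> conjugate G g (mmul (minv g) (mmul gam g)).
Proof.
  intros Hg Hgam; unfold conjugate.
  rewrite <- !mmul_assoc, mmul_minv_r, mmul_1l, mmul_assoc, mmul_minv_r, mmul_1r; auto.
Qed.

Lemma conjugateK g X : SL2 g -> mmul (minv g) (mmul (mmul g (mmul X (minv g))) g) = X.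
Proof.
  intro Hg; rewrite <- !mmul_assoc, mmul_minv_l, mmul_1l, mmul_assoc, mmul_minv_l, mmul_1r; auto.
Qed.

Lemma mdist_conj_1 g X : SL2 g ->
  mdist (mmul g (mmul X (minv g))) mI <= 4 * mnorm g ^ 2 * mdist X mI.
Proof.
  intro Hg.
  assert (E : mmul g (mmul mI (minv g)) = mI) by (rewrite mmul_1l; apply mmul_minv_r; auto).
  pose proof (mdist_mmul_l g (mmul X (minv g)) (mmul mI (minv g))) as Hl; rewrite E in Hl.
  pose proof (mdist_mmul_r (minv g) X mI) as Hr; rewrite mnorm_minv in Hr.
  pose proof (mnorm_nonneg g).
  nra.
Qed.

Section Conjugate.
Variables (G : mat -> Prop) (g : mat).
Hypotheses (HG : discrete_subgroup G) (Hg : SL2 g).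

Lemma conjugate_mmul X Y : mmul g (mmul (mmul X Y) (minv g)) =
  mmul (mmul g (mmul X (minv g))) (mmul g (mmul Y (minv g))).
Proof.
  rewrite !mmul_assoc; do 2 f_equal.
  rewrite <- (mmul_assoc (minv g) g), mmul_minv_l, mmul_1l; auto.
Qed.

Lemma conjugate_discrete_subgroup : discrete_subgroup (conjugate G g).
Proof.
  unfold conjugate; constructor.
  - intros X HX; apply (ds_SL2 _ HG) in HX.
    rewrite <- (conjugateK g X) by auto.
    apply SL2_mmul; [apply SL2_minv|apply SL2_mmul]; auto.
  - rewrite mmul_1l, mmul_minv_r; [apply (ds_one _ HG)|auto].
  - intros X Y HX HY; rewrite conjugate_mmul; apply (ds_mul _ HG); auto.
  - intros X HX; rewrite <- (minvK g) at 1; rewrite <- !minv_mmul, mmul_assoc.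
    apply (ds_inv _ HG); auto.
  - destruct (ds_discrete _ HG) as [eps [Heps Hdisc]].
    set (k := 4 * mnorm g ^ 2 + 1).
    assert (Hk : 0 < k) by (unfold k; nra).
    exists (eps / k); split; [apply Rdiv_lt_0_compat; auto|].
    intros X HX HXd.
    assert (E : mmul g (mmul X (minv g)) = mI).
    { apply Hdisc; auto.
      eapply Rle_lt_trans; [apply mdist_conj_1; auto|].
      pose proof (mdist_nonneg X mI).
      apply Rmult_lt_compat_l with (r := k) in HXd; auto.
      replace (k * (eps / k)) with eps in HXd by (field; lra).
      unfold k in *; nra. }
    rewrite <- (conjugateK g X), E, mmul_1l, mmul_minv_l; auto.
Qed.

End Conjugate.

Fixpoint shimizu_seq (s : R) (X : mat) (n : nat) : mat :=
  match n with
  | O => X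
  | S k => let Y := shimizu_seq s X k in mmul Y (mmul (transl s) (minv Y))
  end.

Lemma SL2_shimizu_seq s X n : SL2 X -> SL2 (shimizu_seq s X n).
Proof.
  intro HX; induction n as [|n IH]; cbn [shimizu_seq]; auto.
  rewrite conj_transl by auto; unfold SL2, mdet in *; cbn [ma mb mc md]; nra.
Qed.

Lemma shimizu_seq_succ s X n : SL2 X ->
  let Y := shimizu_seq s X n in
  ma (shimizu_seq s X (S n)) = 1 - s * ma Y * mc Y /\
  mc (shimizu_seq s X (S n)) = - s * mc Y ^ 2.
Proof.
  intros HX Y; cbn [shimizu_seq]; fold Y.
  rewrite conj_transl by (apply SL2_shimizu_seq; auto); split; reflexivity.
Qed.

Lemma shimizu_seq_mc_neq0 s X n : SL2 X -> s <> 0 -> mc X <> 0 ->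
  mc (shimizu_seq s X n) <> 0.
Proof.
  intros HX Hs HcX; induction n as [|n IH]; auto.
  destruct (shimizu_seq_succ s X n HX) as [_ ->].
  intro E; apply IH; assert (mc (shimizu_seq s X n) ^ 2 = 0) by
    (apply (Rmult_eq_reg_l (- s)); lra).
  nra.
Qed.

Lemma pow_quarter_le n : 0 <= (/ 4) ^ S n <= / 4.
Proof.
  pose proof (pow_incr (/ 4) 1 n ltac:(lra)); rewrite pow1 in *.
  cbn [pow]; split; [apply Rmult_le_pos; [lra | apply pow_le; lra] | nra].
Qed.

Lemma pow_quarter_small y : 0 < y -> exists n, (/ 4) ^ S n < y.
Proof.
  intro Hy; destruct (pow_lt_1_zero (/ 4) ltac:(rewrite Rabs_pos_eq; lra) y Hy) as [N HN].
  exists N; specialize (HN (S N) ltac:(auto)).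
  rewrite Rabs_pos_eq in HN by (apply pow_le; lra); auto.
Qed.

(* With x_n := s c_n one has x_(n+1) = - x_n ^ 2. *)
Lemma shimizu_seq_decay s X n : SL2 X -> Rabs (s * mc X) <= / 4 ->
  let Y := shimizu_seq s X n in
  Rabs (s * mc Y) <= (/ 4) ^ S n /\ Rabs (ma Y) <= 2 * (Rabs (ma X) + 1).
Proof.
  intros HX Hx; induction n as [|n IH]; intro Y.
  - cbn in Y |- *; pose proof (Rabs_pos (ma X)); lra.
  - destruct IH as [IHx IHa].
    destruct (shimizu_seq_succ s X n HX) as [Ea Ec]; fold Y in Ea, Ec.
    set (a := ma (shimizu_seq s X n)) in *; set (c := mc (shimizu_seq s X n)) in *.
    pose proof (pow_quarter_le n).
    pose proof (Rabs_pos (s * c)); pose proof (Rabs_pos a).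
    split.
    + rewrite Ec; replace (s * (- s * c ^ 2)) with (- ((s * c) * (s * c))) by ring.
      rewrite Rabs_Ropp, Rabs_mult; cbn [pow] in *; nra.
    + rewrite Ea; replace (1 - s * a * c) with (1 + - (a * (s * c))) by ring.
      eapply Rle_trans; [apply Rabs_triang|].
      rewrite Rabs_R1, Rabs_Ropp, Rabs_mult; pose proof (Rabs_pos (ma X)); nra.
Qed.

Lemma conj_transl_near_transl s Y e B : 0 < s -> SL2 Y ->
  Rabs (ma Y - 1) <= e -> Rabs (s * mc Y) <= e -> e <= 1 -> Rabs (ma Y) <= B ->
  mdist (mmul Y (mmul (transl s) (minv Y))) (transl s) <= (B + s * (B + 1) + / s) * e.
Proof.
  intros Hs HY Ha Hx He HB.
  rewrite conj_transl by auto.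
  set (a := ma Y) in *; set (c := mc Y) in *.
  assert (0 <= e) by (pose proof (Rabs_pos (s * c)); lra).
  assert (Hsi : 0 < / s) by (apply Rinv_0_lt_compat; auto).
  assert (Hax : Rabs (a * (s * c)) <= B * e)
    by (rewrite Rabs_mult; apply Rmult_le_compat; auto using Rabs_pos).
  pose proof (Rabs_pos (a + 1)).
  assert (Ha1 : Rabs (a + 1) <= B + 1)
    by (pose proof (Rabs_triang a 1); rewrite Rabs_R1 in *; lra).
  assert (Hxx : Rabs ((s * c) * (s * c)) <= e)
    by (rewrite Rabs_mult; pose proof (Rabs_pos (s * c)); nra).
  assert (0 <= B) by (pose proof (Rabs_pos a); lra).
  assert (0 <= s * (B + 1) * e) by (repeat apply Rmult_le_pos; lra).
  assert (0 <= / s * e) by (apply Rmult_le_pos; lra).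
  assert (0 <= B * e) by (apply Rmult_le_pos; lra).
  apply mdist_le; unfold transl; cbn [ma mb mc md].
  - replace (1 - s * a * c - 1) with (- (a * (s * c))) by ring.
    rewrite Rabs_Ropp; lra.
  - replace (s * a ^ 2 - s) with (s * ((a - 1) * (a + 1))) by ring.
    rewrite !Rabs_mult, (Rabs_pos_eq s) by lra.
    assert (Rabs (a - 1) * Rabs (a + 1) <= e * (B + 1))
      by (apply Rmult_le_compat; auto using Rabs_pos).
    nra.
  - replace (- s * c ^ 2 - 0) with (- (/ s * ((s * c) * (s * c)))) by (field; lra).
    rewrite Rabs_Ropp, Rabs_mult, (Rabs_pos_eq (/ s)) by lra.
    nra.
  - replace (1 + s * a * c - 1) with (a * (s * c)) by ring.
    lra.
Qed.

Lemma shimizu_seq_cvg_transl s X eps : 0 < s -> SL2 X -> Rabs (s * mc X) <= / 4 -> 0 < eps ->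
  exists n, mdist (shimizu_seq s X n) (transl s) < eps.
Proof.
  intros Hs HX Hsmall Heps.
  set (B := 2 * (Rabs (ma X) + 1)).
  assert (HB : 2 <= B) by (unfold B; pose proof (Rabs_pos (ma X)); lra).
  set (K := B + s * (B + 1) + / s).
  assert (HK : 0 <= K).
  { assert (0 < / s) by (apply Rinv_0_lt_compat; auto).
    assert (0 <= s * (B + 1)) by (apply Rmult_le_pos; lra).
    unfold K; lra. }
  destruct (pow_quarter_small (Rmin 1 eps / (K * B + B))
              ltac:(apply Rdiv_lt_0_compat; [apply Rmin_glb_lt|]; nra)) as [n Hn].
  pose proof (pow_quarter_le n).
  set (r := (/ 4) ^ S n) in *.
  assert (Hr : (K * B + B) * r < Rmin 1 eps).
  { apply Rmult_lt_compat_l with (r := K * B + B) in Hn; [|nra].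
    replace ((K * B + B) * (Rmin 1 eps / (K * B + B))) with (Rmin 1 eps) in Hn by (field; nra).
    lra. }
  pose proof (Rmin_l 1 eps); pose proof (Rmin_r 1 eps).
  exists (S (S n)).
  set (Y := shimizu_seq s X (S n)).
  destruct (shimizu_seq_decay s X n HX Hsmall) as [Hxn Han]; fold r B in Hxn, Han.
  destruct (shimizu_seq_decay s X (S n) HX Hsmall) as [HxY HaY]; fold B Y in HxY, HaY.
  destruct (shimizu_seq_succ s X n HX) as [EaY _]; fold Y in EaY.
  assert (HaY1 : Rabs (ma Y - 1) <= B * r).
  { rewrite EaY.
    replace (1 - s * _ * _ - 1)
      with (- (ma (shimizu_seq s X n) * (s * mc (shimizu_seq s X n)))) by ring.
    rewrite Rabs_Ropp, Rabs_mult; apply Rmult_le_compat; auto using Rabs_pos. }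
  assert (HxY' : Rabs (s * mc Y) <= B * r)
    by (change ((/ 4) ^ S (S n)) with (/ 4 * r) in HxY; nra).
  pose proof (conj_transl_near_transl s Y (B * r) B Hs (SL2_shimizu_seq s X (S n) HX)
                HaY1 HxY' ltac:(nra) HaY) as Hnear.
  assert (0 <= B * r) by nra.
  change (shimizu_seq s X (S (S n))) with (mmul Y (mmul (transl s) (minv Y))).
  fold K in Hnear; lra.
Qed.

Section Shimizu.
Variables (G : mat -> Prop) (s : R).
Hypotheses (HG : discrete_subgroup G) (Hs : 0 < s) (HT : G (transl s)).

Lemma shimizu_seq_mem X n : G X -> G (shimizu_seq s X n).
Proof.
  intro HX; induction n as [|n IH]; cbn [shimizu_seq]; auto.
  apply (ds_mul _ HG); [|apply (ds_mul _ HG); [|apply (ds_inv _ HG)]]; auto.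
Qed.

(* Shimizu's lemma, with the constant 1/4 instead of 1. *)
Lemma shimizu X : G X -> mc X <> 0 -> / 4 < Rabs (s * mc X).
Proof.
  intros HX HcX; apply Rnot_le_lt; intro Hsmall.
  pose proof (ds_SL2 _ HG _ HX) as HXsl.
  destruct (ds_discrete _ HG) as [d [Hd Hdisc]].
  set (m := mnorm (minv (transl s))).
  assert (Hm : 0 <= m) by apply mnorm_nonneg.
  destruct (shimizu_seq_cvg_transl s X (d / (2 * m + 1)) Hs HXsl Hsmall
              ltac:(apply Rdiv_lt_0_compat; lra)) as [n Hn].
  set (Y := shimizu_seq s X n) in *.
  assert (HZ : mmul Y (minv (transl s)) = mI).
  { apply Hdisc.
    - apply (ds_mul _ HG); [apply shimizu_seq_mem | apply (ds_inv _ HG)]; auto.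
    - rewrite <- (mmul_minv_r (transl s)) by apply SL2_transl.
      eapply Rle_lt_trans; [apply mdist_mmul_r|]; fold m.
      apply Rmult_lt_compat_l with (r := 2 * m + 1) in Hn; [|lra].
      replace ((2 * m + 1) * (d / (2 * m + 1))) with d in Hn by (field; lra).
      pose proof (mdist_nonneg Y (transl s)); nra. }
  apply (shimizu_seq_mc_neq0 s X n HXsl ltac:(lra) HcX); fold Y.
  replace Y with (transl s); [reflexivity|].
  rewrite <- (mmul_1l (transl s)), <- HZ, mmul_assoc, mmul_minv_l, mmul_1r; auto using SL2_transl.
Qed.

End Shimizu.

Lemma eigenvector_matrix h l m k : SL2 h -> mc h <> 0 -> l * m = 1 -> l + m = ma h + md h ->
  mmul h (Mat (k * (l - md h)) (k * (m - md h)) (k * mc h) (k * mc h)) =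
  mmul (Mat (k * (l - md h)) (k * (m - md h)) (k * mc h) (k * mc h)) (Mat l 0 0 m).
Proof.
  destruct h as [a b c d]; unfold SL2, mdet, mmul; cbn [ma mb mc md].
  intros Hdet Hc Hlm Htr.
  assert (Hl : l <> 0) by (intro; subst; lra).
  replace m with (/ l) in * by (field_simplify_eq; lra).
  replace b with ((a * d - 1) / c) by (field_simplify_eq; lra).
  replace a with (l + / l - d) by lra.
  f_equal; field; auto.
Qed.

Lemma hyperbolic_eigenframe h : SL2 h -> 0 < mc h -> 2 < ma h + md h ->
  exists P L, SL2 P /\ 0 < L /\ mmul h P = gflow L P /\
    0 < mc P /\ md P = mc P /\ mc P ^ 2 * sqrt ((ma h + md h) ^ 2 - 4) = mc h.
Proof.
  intros Hh Hc Htr.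
  set (tau := ma h + md h) in *; set (S := sqrt (tau ^ 2 - 4)).
  assert (HS2 : S * S = tau ^ 2 - 4) by (apply sqrt_sqrt; nra).
  assert (HS : 0 < S) by (apply sqrt_lt_R0; nra).
  set (l := (tau + S) / 2); set (m := (tau - S) / 2).
  assert (Hlm : l * m = 1) by (unfold l, m; nra).
  assert (Hl : 1 < l) by (unfold l; lra).
  assert (HcS : 0 < sqrt (mc h * S)) by (apply sqrt_lt_R0; nra).
  set (k := / sqrt (mc h * S)).
  assert (Hk : 0 < k) by (apply Rinv_0_lt_compat; auto).
  assert (Hk2 : k * k * (mc h * S) = 1).
  { unfold k; rewrite <- Rinv_mult, sqrt_sqrt by nra; field; nra. }
  exists (Mat (k * (l - md h)) (k * (m - md h)) (k * mc h) (k * mc h)), (2 * ln l).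
  repeat split; cbn [ma mb mc md].
  - unfold SL2, mdet; cbn [ma mb mc md].
    replace (l - md h) with (m - md h + S) by (unfold l, m; field); nra.
  - assert (0 < ln l) by (rewrite <- ln_1; apply ln_increasing; lra); lra.
  - unfold gflow; rewrite a_t_2ln by lra.
    replace (/ l) with m by (field_simplify_eq; lra).
    apply eigenvector_matrix; [exact Hh | lra | exact Hlm | unfold l, m, tau; field].
  - nra.
  - fold tau S; nra.
Qed.

Section Periodic.
Variables (G : mat -> Prop) (s : R).
Hypotheses (HG : discrete_subgroup G) (Hs : 0 < s) (HT : G (transl s)).

Lemma transl_nat_mem n : G (transl (INR n * s)).
Proof.
  induction n as [|n IH].
  - rewrite Rmult_0_l, transl_0; apply (ds_one _ HG).
  - rewrite S_INR, Rmult_plus_distr_r, Rmult_1_l, transl_add; apply (ds_mul _ HG); auto.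
Qed.

(* Translating by a large power of T pushes the trace to infinity. *)
Lemma large_trace_element X M : G X -> mc X <> 0 ->
  exists h, G h /\ mc h = Rabs (mc X) /\ M <= ma h + md h.
Proof.
  intros HX HcX.
  assert (exists Y, G Y /\ mc Y = Rabs (mc X)) as [Y [HY HcY]].
  { destruct (Rlt_or_le 0 (mc X)).
    - exists X; rewrite Rabs_pos_eq; auto; lra.
    - exists (minv X); split; [apply (ds_inv _ HG); auto|].
      rewrite Rabs_left by lra; reflexivity. }
  assert (Hc : 0 < mc Y) by (rewrite HcY; apply Rabs_pos_lt; auto).
  destruct (INR_archimed (s * mc Y) (M - ma Y - md Y) ltac:(nra)) as [n Hn].
  exists (mmul (transl (INR n * s)) Y); split; [apply (ds_mul _ HG); auto using transl_nat_mem|].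
  unfold mmul, transl; cbn [ma mb mc md]; split; [lra | nra].
Qed.

(* A small bottom row of P means that P.i lies high in the cusp at oo. *)
Lemma high_periodic_frame X r : G X -> mc X <> 0 -> 0 < r ->
  exists h P L, G h /\ SL2 P /\ 0 < L /\ mmul h P = gflow L P /\
    mc P <> 0 /\ Rabs (mc P) <= r /\ Rabs (md P) <= r.
Proof.
  intros HX HcX Hr.
  set (c := Rabs (mc X)).
  assert (Hc : 0 < c) by (apply Rabs_pos_lt; auto).
  destruct (large_trace_element X (c / r ^ 2 + 3) HX HcX) as [h [Hh [Hch Htr]]]; fold c in Hch.
  assert (Hcr : 0 < c / r ^ 2) by (apply Rdiv_lt_0_compat; nra).
  destruct (hyperbolic_eigenframe h (ds_SL2 _ HG _ Hh) ltac:(lra) ltac:(lra))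
    as [P [L (HP & HL & Hper & HcP & HdP & HcPS)]].
  assert (HPr : mc P <= r).
  { set (tau := ma h + md h) in *; set (S := sqrt (tau ^ 2 - 4)) in *.
    assert (HS2 : S * S = tau ^ 2 - 4) by (apply sqrt_sqrt; nra).
    assert (HS0 : 0 <= S) by apply sqrt_pos.
    assert (HS : tau - 2 <= S) by nra.
    assert (HrS : c <= r ^ 2 * S).
    { replace c with (r ^ 2 * (c / r ^ 2)) by (field; lra).
      apply Rmult_le_compat_l; nra. }
    assert (mc P ^ 2 <= r ^ 2) by (apply Rmult_le_reg_r with S; nra).
    nra. }
  exists h, P, L; repeat split; auto; [lra| |]; rewrite ?HdP, Rabs_pos_eq; lra.
Qed.

End Periodic.

Lemma parabolic_nilpotent_part p : SL2 p -> parabolic p ->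
  exists e, (e = 1 \/ e = -1) /\ e * (ma p + md p) = 2 /\
    (e * ma p - 1) ^ 2 + (e * mb p) * (e * mc p) = 0 /\ (e * mb p <> 0 \/ e * mc p <> 0).
Proof.
  destruct p as [a b c d]; unfold SL2, mdet, parabolic, mI, mnegI; cbn [ma mb mc md].
  intros Hdet (HnI & HnnegI & Htr).
  assert (exists e, (e = 1 \/ e = -1) /\ a + d = 2 * e) as [e [He Had]].
  { assert ((a + d - 2) * (a + d + 2) = 0) as [E | E]%Rmult_integral by nra.
    - exists 1; split; [left|]; lra.
    - exists (-1); split; [right|]; lra. }
  exists e; split; [exact He|].
  assert (Hee : e * e = 1) by (destruct He; subst; lra).
  split; [rewrite Had; nra|].
  split; [replace d with (2 * e - a) in Hdet by lra; nra|].
  destruct (Req_dec (e * b) 0) as [Hb|Hb]; [|left; exact Hb].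
  destruct (Req_dec (e * c) 0) as [Hc|Hc]; [|right; exact Hc].
  exfalso.
  assert (b = 0) by nra; assert (c = 0) by nra; subst b c.
  assert (a = d) by nra; subst d.
  destruct He; subst e; [apply HnI | apply HnnegI]; f_equal; nra.
Qed.

Lemma nilpotent_factor al be ga : al ^ 2 + be * ga = 0 -> (be <> 0 \/ ga <> 0) ->
  exists sg x y, (sg = 1 \/ sg = -1) /\ (x <> 0 \/ y <> 0) /\
    sg * x ^ 2 = be /\ - sg * y ^ 2 = ga /\ - sg * x * y = al.
Proof.
  intros Hnil Hnz.
  destruct (Req_dec be 0) as [Hbe | Hbe].
  - assert (Hga : ga <> 0) by (destruct Hnz; tauto).
    assert (Hal : al = 0) by (subst be; nra); subst al be.
    set (y := sqrt (Rabs ga)).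
    assert (Hsq : y * y = Rabs ga) by (apply sqrt_sqrt, Rabs_pos).
    assert (0 < y) by (apply sqrt_lt_R0, Rabs_pos_lt; auto).
    destruct (Rle_or_lt 0 ga).
    + exists (-1), 0, y; rewrite Rabs_pos_eq in Hsq by lra.
      repeat split; [right; lra | right; lra | ring | nra | ring].
    + exists 1, 0, y; rewrite Rabs_left in Hsq by lra.
      repeat split; [left; lra | right; lra | ring | nra | ring].
  - set (x := sqrt (Rabs be)).
    assert (Hsq : x * x = Rabs be) by (apply sqrt_sqrt, Rabs_pos).
    assert (Hx : 0 < x) by (apply sqrt_lt_R0, Rabs_pos_lt; auto).
    destruct (Rle_or_lt 0 be).
    + exists 1, x, (- al / x); rewrite Rabs_pos_eq in Hsq by lra.
      repeat split; [left; lra | left; lra | nra | | field; lra].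
      replace ((- al / x) ^ 2) with (al ^ 2 / (x * x)) by (field; lra).
      rewrite Hsq; replace (al ^ 2) with (- be * ga) by lra; field; lra.
    + exists (-1), x, (al / x); rewrite Rabs_left in Hsq by lra.
      repeat split; [right; lra | left; lra | nra | | field; lra].
      replace ((al / x) ^ 2) with (al ^ 2 / (x * x)) by (field; lra).
      rewrite Hsq; replace (al ^ 2) with (- be * ga) by lra; field; lra.
Qed.

Lemma SL2_completion x y : x <> 0 \/ y <> 0 -> exists g, SL2 g /\ ma g = x /\ mc g = y.
Proof.
  intro Hxy.
  assert (Hn : 0 < x ^ 2 + y ^ 2) by (destruct Hxy; nra).
  exists (Mat x (- y / (x ^ 2 + y ^ 2)) y (x / (x ^ 2 + y ^ 2))).
  unfold SL2, mdet; cbn [ma mb mc md]; repeat split; field; lra.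
Qed.

Lemma parabolic_conj_transl p : SL2 p -> parabolic p ->
  exists g e sg, SL2 g /\ (e = 1 \/ e = -1) /\ (sg = 1 \/ sg = -1) /\
    mmul (Mat e 0 0 e) p = mmul g (mmul (transl sg) (minv g)).
Proof.
  intros Hp Hpar.
  destruct (parabolic_nilpotent_part p Hp Hpar) as [e (He & Htr & Hnil & Hnz)].
  destruct (nilpotent_factor _ _ _ Hnil Hnz) as [sg [x [y (Hsg & Hxy & Hb & Hc & Ha)]]].
  destruct (SL2_completion x y Hxy) as [g (Hg & Hgx & Hgy)].
  exists g, e, sg; repeat split; auto.
  rewrite conj_transl, Hgx, Hgy by auto.
  unfold mmul; cbn [ma mb mc md]; f_equal; nra.
Qed.

(* [ma g * y - mc g * x = 0] says that the boundary point [x : y] is g.oo. *)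
Lemma cusp_frame Gam p : torsion_free_fuchsian Gam -> Gam p -> parabolic p ->
  exists g, SL2 g /\ conjugate Gam g (transl 1) /\
    forall x y, fixes_bd p x y -> ma g * y - mc g * x = 0.
Proof.
  intros HG Hp Hpar.
  destruct (parabolic_conj_transl p (fu_SL2 _ HG _ Hp) Hpar) as [g [e [sg (Hg & He & Hsg & Hconj)]]].
  assert (HeI : mmul (Mat e 0 0 e) (Mat e 0 0 e) = mI)
    by (unfold mmul, mI; cbn [ma mb mc md]; destruct He; subst; f_equal; ring).
  exists g; repeat split; auto.
  - assert (HTsg : conjugate Gam g (transl sg)).
    { unfold conjugate; rewrite <- Hconj; apply (fu_mul _ HG); auto.
      destruct He; subst e; [apply (fu_one _ HG) | apply (fu_negI _ HG)]. }
    destruct Hsg; subst sg; auto.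
    replace (transl 1) with (minv (transl (-1))) by (rewrite minv_transl; f_equal; ring).
    apply (ds_inv _ (conjugate_discrete_subgroup _ _ (fuchsian_discrete_subgroup _ HG) Hg)); auto.
  - intros x y Hfix.
    replace p with (mmul (Mat e 0 0 e) (mmul g (mmul (transl sg) (minv g)))) in Hfix
      by (rewrite <- Hconj, <- mmul_assoc, HeI; apply mmul_1l).
    revert Hfix; unfold fixes_bd; rewrite conj_transl by auto; unfold mmul; cbn [ma mb mc md].
    intro Hfix.
    assert (Hesg : (e * sg) * ((ma g * y - mc g * x) * (ma g * y - mc g * x)) = 0)
      by (rewrite <- Hfix; ring).
    assert (e * sg <> 0) by (destruct He, Hsg; subst; lra).
    apply Rmult_integral in Hesg as [|Hsq]; [contradiction|].
    apply Rmult_integral in Hsq as [|]; auto.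
Qed.

Lemma transl_mem_separated G : discrete_subgroup G ->
  exists d, 0 < d /\
    forall s1 s2, G (transl s1) -> G (transl s2) -> Rabs (s1 - s2) < d -> s1 = s2.
Proof.
  intro HG; destruct (ds_discrete _ HG) as [d [Hd Hdisc]].
  exists d; split; auto; intros s1 s2 H1 H2 Hlt.
  assert (E : transl (s1 - s2) = mI).
  { apply Hdisc.
    - unfold Rminus; rewrite transl_add, <- minv_transl.
      apply (ds_mul _ HG); [|apply (ds_inv _ HG)]; auto.
    - apply Rle_lt_trans with (Rabs (s1 - s2)); auto.
      apply mdist_le; unfold transl, mI; cbn [ma mb mc md];
        rewrite ?Rminus_diag, ?Rminus_0_r, ?Rabs_R0; auto using Rabs_pos, Rle_refl. }
  injection E; lra.
Qed.

Lemma min_translation G s0 : discrete_subgroup G -> 0 < s0 -> G (transl s0) ->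
  exists tau, 0 < tau /\ G (transl tau) /\ forall s, 0 < s < tau -> ~ G (transl s).
Proof.
  intros HG Hs0 HT0.
  destruct (transl_mem_separated G HG) as [d [Hd Hsep]].
  (* tau is the infimum of the positive translation lengths, attained by discreteness *)
  set (E := fun x => exists s, x = - s /\ 0 < s /\ G (transl s)).
  assert (HEb : bound E) by (exists 0; intros x [s [-> [Hs _]]]; lra).
  assert (HEne : exists x, E x) by (exists (- s0), s0; auto).
  destruct (completeness E HEb HEne) as [m [Hub Hlub]].
  assert (exists tau, 0 < tau /\ G (transl tau) /\ tau < - m + d) as [tau (Htau & HTtau & Htaum)].
  { apply NNPP; intro Hn; assert (m <= m - d) by
      (apply Hlub; intros x [s [-> [Hs Gs]]]; apply Rnot_lt_le; intro; apply Hn;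
       exists s; repeat split; auto; lra).
    lra. }
  exists tau; repeat split; auto.
  intros s [Hs Hst] HTs.
  assert (- s <= m) by (apply Hub; exists s; auto).
  assert (s = tau) by (apply Hsep; auto; rewrite Rabs_left; lra).
  lra.
Qed.

Section Frame.
Variables (Gam : mat -> Prop) (g : mat).
Hypotheses (HG : torsion_free_fuchsian Gam) (Hg : SL2 g).

(* Otherwise g.oo would be a one-point orbit of Gam. *)
Lemma not_elementary_moves_cusp : ~ elementary Gam ->
  exists gam, Gam gam /\ mc (mmul (minv g) (mmul gam g)) <> 0.
Proof.
  intro Hne; apply NNPP; intro Hall; apply Hne.
  exists (cons (Bd (ma g) (mc g)) nil); repeat split; [discriminate| |].
  - repeat constructor; intros [Ha Hc]; unfold SL2, mdet in Hg; rewrite Ha, Hc in Hg; lra.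
  - intros gam z Hgam [<- | []].
    exists (Bd (ma g) (mc g)); split; [left; reflexivity|].
    assert (H : mc (mmul (minv g) (mmul gam g)) = 0) by (apply NNPP; intro; apply Hall; eauto).
    revert H; unfold mmul, minv, act, same_hpt; cbn [ma mb mc md]; intro; lra.
Qed.

Lemma periodic_nonwandering H w L : Gam H -> SL2 w -> 0 < L -> mmul H w = gflow L w ->
  nonwandering Gam w.
Proof.
  intros HH Hw HL Hper; split; auto.
  assert (Hret : forall k, Gam (mpow (minv H) k) /\
                   mmul (mpow (minv H) k) (gflow (INR k * L) w) = w).
  { induction k as [|k [IHG IHw]].
    - split; [apply (fu_one _ HG)|]; cbn [mpow INR].
      rewrite Rmult_0_l, gflow_0; apply mmul_1l.
    - split; cbn [mpow]; [apply (fu_mul _ HG); auto; apply (fu_inv _ HG); auto|].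
      rewrite S_INR, Rmult_plus_distr_r, Rmult_1_l, gflow_add, mmul_assoc, mmul_gflow, IHw.
      rewrite <- Hper, <- mmul_assoc, mmul_minv_l; [apply mmul_1l | apply (fu_SL2 _ HG); auto]. }
  intros eps T Heps.
  destruct (INR_archimed L (Rmax T 0) HL) as [k Hk].
  destruct (Hret k) as [HGk Hwk].
  exists (INR k * L), w, (mpow (minv H) k); repeat split; auto.
  - pose proof (Rmax_l T 0); lra.
  - rewrite mdist_refl; auto.
  - rewrite Hwk, mdist_refl; auto.
Qed.

Lemma high_nonwandering_vector s r : ~ elementary Gam -> 0 < s -> conjugate Gam g (transl s) -> 0 < r ->
  exists w, nonwandering Gam w /\ mc (mmul (minv g) w) <> 0 /\
    Rabs (mc (mmul (minv g) w)) <= r /\ Rabs (md (mmul (minv g) w)) <= r.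
Proof.
  intros Hne Hs HT Hr.
  pose proof (conjugate_discrete_subgroup _ _ (fuchsian_discrete_subgroup _ HG) Hg) as HGg.
  destruct (not_elementary_moves_cusp Hne) as [gam [Hgam Hc]].
  destruct (high_periodic_frame _ s HGg Hs HT _ r (conjugate_mem _ _ _ Hg Hgam) Hc Hr)
    as [h [P [L (Hh & HP & HL & Hper & HcP & HcPr & HdPr)]]].
  assert (EP : mmul (minv g) (mmul g P) = P) by (rewrite <- mmul_assoc, mmul_minv_l, mmul_1l; auto).
  exists (mmul g P); rewrite EP; refine (conj _ (conj HcP (conj HcPr HdPr))).
  apply (periodic_nonwandering (mmul g (mmul h (minv g))) _ L); auto using SL2_mmul.
  rewrite !mmul_assoc, <- (mmul_assoc (minv g) g), mmul_minv_l, mmul_1l, Hper by auto.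
  apply mmul_gflow.
Qed.

End Frame.

Lemma im_at_i_ge X K : SL2 X -> 0 < K ->
  Rabs (mc X) <= / (K + 1) -> Rabs (md X) <= / (K + 1) -> K <= im_at_i X.
Proof.
  intros HX HK Hc Hd; unfold im_at_i.
  set (r := / (K + 1)) in *.
  assert (Hr : r * (K + 1) = 1) by (unfold r; field; lra).
  assert (mc X ^ 2 <= r ^ 2) by (rewrite <- pow2_abs; pose proof (Rabs_pos (mc X)); nra).
  assert (md X ^ 2 <= r ^ 2) by (rewrite <- pow2_abs; pose proof (Rabs_pos (md X)); nra).
  assert (2 * r ^ 2 * K <= 1) by nra.
  rewrite <- (Rinv_inv K); apply Rinv_le_contravar; [apply SL2_bottom_row_pos; auto|].
  apply Rmult_le_reg_r with K; auto.
  rewrite Rinv_l by lra; nra.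
Qed.

Lemma Un_cv_div_unbounded tau y : (forall n, INR n + 1 <= y n) ->
  Un_cv (fun n => tau / y n) 0.
Proof.
  intros Hy eps Heps.
  destruct (INR_archimed eps (Rabs tau) Heps) as [N HN].
  exists N; intros n Hn; unfold R_dist.
  pose proof (Hy n); pose proof (le_INR _ _ Hn); pose proof (pos_INR N).
  assert (Hyn : 0 < y n) by lra.
  unfold Rdiv; rewrite Rminus_0_r, Rabs_mult, Rabs_inv, (Rabs_pos_eq (y n)) by lra.
  apply Rmult_lt_reg_r with (y n); auto.
  rewrite Rmult_assoc, Rinv_l, Rmult_1_r by lra.
  nra.
Qed.

Section Orbit.
Variables (Gam : mat -> Prop) (u : mat).
Hypotheses (HG : torsion_free_fuchsian Gam) (Hu : SL2 u)
  (Hdense : forward_orbit_dense_in_NW Gam u).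

Lemma orbit_approaches_bottom_row g w r : nonwandering Gam w -> 0 < r ->
  exists t gam, 0 <= t /\ Gam gam /\
    Rabs (mc (mmul (minv g) (mmul gam (gflow t u))) - mc (mmul (minv g) w)) < r /\
    Rabs (md (mmul (minv g) (mmul gam (gflow t u))) - md (mmul (minv g) w)) < r.
Proof.
  intros Hw Hr.
  set (k := 2 * mnorm g + 1).
  assert (Hk : 0 < k) by (pose proof (mnorm_nonneg g); unfold k; lra).
  destruct (proj2 Hdense w Hw (r / k) ltac:(apply Rdiv_lt_0_compat; auto))
    as [t [gam (Ht & Hgam & Hd)]].
  set (X := mmul gam (gflow t u)) in *.
  assert (Hdist : mdist (mmul (minv g) X) (mmul (minv g) w) < r).
  { eapply Rle_lt_trans; [apply mdist_mmul_l|]; rewrite mnorm_minv.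
    apply Rle_lt_trans with (2 * mnorm g * (r / k)).
    - apply Rmult_le_compat_l; [pose proof (mnorm_nonneg g)|]; lra.
    - replace (2 * mnorm g * (r / k)) with (r - r / k) by (unfold k in *; field; lra).
      assert (0 < r / k) by (apply Rdiv_lt_0_compat; auto); lra. }
  destruct (mdist_entries (mmul (minv g) X) (mmul (minv g) w)) as (_ & _ & Hc & Hdd).
  exists t, gam; unfold X in *; repeat split; auto; lra.
Qed.

(* The lower-left entry is (g^-1 gam g)_21 (g^-1 u)_11 e^(t/2); Shimizu's
   lemma applies to the first factor. *)
Lemma bottom_entry_dichotomy g gam t : SL2 g -> conjugate Gam g (transl 1) ->
  mc (mmul (minv g) u) = 0 -> Gam gam -> 0 <= t ->
  mc (mmul (minv g) (mmul gam (gflow t u))) = 0 \/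
  Rabs (ma (mmul (minv g) u)) / 4 < Rabs (mc (mmul (minv g) (mmul gam (gflow t u)))).
Proof.
  intros Hg HT1 Hcv Hgam Ht.
  assert (Hv : SL2 (mmul (minv g) u)) by (apply SL2_mmul; auto using SL2_minv).
  pose proof (conjugate_mem _ _ _ Hg Hgam) as Hga.
  assert (E : mmul (minv g) (mmul gam (gflow t u)) =
              mmul (mmul (minv g) (mmul gam g)) (gflow t (mmul (minv g) u))).
  { unfold gflow; rewrite !mmul_assoc; do 2 f_equal.
    rewrite <- (mmul_assoc g), mmul_minv_r, mmul_1l; auto. }
  rewrite E; revert Hv Hcv Hga.
  generalize (mmul (minv g) u) (mmul (minv g) (mmul gam g)); intros v ga Hv Hcv Hga.
  assert (Ec : mc (mmul ga (gflow t v)) = mc ga * ma v * exp (t / 2))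
    by (unfold gflow, a_t, mmul; cbn [ma mb mc md]; rewrite Hcv; ring).
  rewrite Ec.
  destruct (Req_dec (mc ga) 0) as [Hz | Hnz]; [left; rewrite Hz; ring | right].
  pose proof (shimizu _ 1 (conjugate_discrete_subgroup _ _ (fuchsian_discrete_subgroup _ HG) Hg)
                ltac:(lra) HT1 ga Hga Hnz) as Hsh.
  rewrite Rmult_1_l in Hsh.
  assert (Hav : 0 < Rabs (ma v))
    by (apply Rabs_pos_lt; intro Ha; unfold SL2, mdet in Hv; rewrite Ha, Hcv in Hv; lra).
  assert (He : 1 <= exp (t / 2)) by (pose proof (exp_ineq1_le (t / 2)); lra).
  rewrite !Rabs_mult, (Rabs_pos_eq (exp (t / 2))) by (left; apply exp_pos).
  assert (Rabs (ma v) / 4 < Rabs (mc ga) * Rabs (ma v)) by nra.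
  assert (0 <= Rabs (mc ga) * Rabs (ma v)) by (apply Rmult_le_pos; apply Rabs_pos).
  nra.
Qed.

Lemma not_escaping_through_cusp : ~ elementary Gam ->
  ~ exists p, Gam p /\ parabolic p /\ fixes_bd p (ma u) (mc u).
Proof.
  intros Hne [p (Hp & Hpar & Hfix)].
  destruct (cusp_frame Gam p HG Hp Hpar) as [g (Hg & HT1 & Hcusp)].
  assert (Hcv : mc (mmul (minv g) u) = 0)
    by (pose proof (Hcusp _ _ Hfix); unfold mmul, minv; cbn [ma mb mc md]; lra).
  set (av := Rabs (ma (mmul (minv g) u))).
  assert (Hav : 0 < av).
  { apply Rabs_pos_lt; intro Ha.
    pose proof (SL2_mmul _ _ (SL2_minv _ Hg) Hu) as Hv; unfold SL2, mdet in Hv.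
    rewrite Ha, Hcv in Hv; lra. }
  destruct (high_nonwandering_vector Gam g HG Hg 1 (av / 8) Hne ltac:(lra) HT1 ltac:(lra))
    as [w (Hw & Hcw & Hcwr & _)].
  set (cw := mc (mmul (minv g) w)) in *.
  assert (Hcw0 : 0 < Rabs cw) by (apply Rabs_pos_lt; auto).
  destruct (orbit_approaches_bottom_row g w (Rabs cw / 2) Hw ltac:(lra))
    as [t [gam (Ht & Hgam & Hc & _)]]; fold cw in Hc.
  pose proof (Rabs_triang_inv (mc (mmul (minv g) (mmul gam (gflow t u)))) cw).
  destruct (bottom_entry_dichotomy g gam t Hg HT1 Hcv Hgam Ht) as [E | Hbig].
  - rewrite E, Rminus_0_l, Rabs_Ropp in Hc; lra.
  - fold av in Hbig; lra.
Qed.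

Lemma cusp_height_unbounded g K : ~ elementary Gam -> SL2 g -> conjugate Gam g (transl 1) ->
  0 < K -> exists t gam, 0 <= t /\ Gam gam /\
    K <= im_at_i (mmul (minv g) (mmul gam (gflow t u))).
Proof.
  intros Hne Hg HT1 HK.
  set (r := / (K + 1)).
  assert (Hr : 0 < r) by (apply Rinv_0_lt_compat; lra).
  destruct (high_nonwandering_vector Gam g HG Hg 1 (r / 2) Hne ltac:(lra) HT1 ltac:(lra))
    as [w (Hw & _ & Hcw & Hdw)].
  destruct (orbit_approaches_bottom_row g w (r / 2) Hw ltac:(lra))
    as [t [gam (Ht & Hgam & Hc & Hd)]].
  exists t, gam; repeat split; auto.
  set (X := mmul (minv g) (mmul gam (gflow t u))) in *.
  pose proof (Rabs_triang_inv (mc X) (mc (mmul (minv g) w))).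
  pose proof (Rabs_triang_inv (md X) (md (mmul (minv g) w))).
  apply im_at_i_ge; auto; fold r; try lra.
  apply SL2_mmul; [apply SL2_minv | apply SL2_mmul; [apply (fu_SL2 _ HG) | apply SL2_gflow]]; auto.
Qed.

Lemma cusp_recurrent_of_unbounded_height g : ~ elementary Gam -> SL2 g ->
  conjugate Gam g (transl 1) ->
  exists (gs : nat -> mat) (y tau t : nat -> R),
    (forall n, closed_horocycle Gam (gs n) (y n) (tau n) /\ 0 <= t n /\
       on_horocycle Gam (gs n) (y n) (gflow (t n) u)) /\
    Un_cv (fun n => horocycle_length (y n) (tau n)) 0.
Proof.
  intros Hne Hg HT1.
  destruct (min_translation _ 1 (conjugate_discrete_subgroup _ _ (fuchsian_discrete_subgroup _ HG) Hg)
              ltac:(lra) HT1) as [tau (Htau & HTtau & Hmin)].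
  assert (Hhigh : forall n : nat, {tg : R * mat | 0 <= fst tg /\ Gam (snd tg) /\
            INR n + 1 <= im_at_i (mmul (minv g) (mmul (snd tg) (gflow (fst tg) u)))}).
  { intro n; apply constructive_indefinite_description.
    destruct (cusp_height_unbounded g (INR n + 1) Hne Hg HT1) as [t [gam H]];
      [pose proof (pos_INR n); lra|].
    exists (t, gam); exact H. }
  set (y := fun n => im_at_i (mmul (minv g) (mmul (snd (proj1_sig (Hhigh n)))
                                    (gflow (fst (proj1_sig (Hhigh n))) u)))).
  assert (Hy : forall n, INR n + 1 <= y n) by (intro n; apply (proj2_sig (Hhigh n))).
  exists (fun _ => g), y, (fun _ => tau), (fun n => fst (proj1_sig (Hhigh n))); split.
  - intro n; destruct (proj2_sig (Hhigh n)) as (Ht & Hgam & _).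
    pose proof (Hy n); pose proof (pos_INR n).
    repeat split; auto; [lra | exists (snd (proj1_sig (Hhigh n))); auto].
  - exact (Un_cv_div_unbounded tau y Hy).
Qed.

End Orbit.

Theorem mainTheorem13 (Gam : mat -> Prop) (u : mat) :
  torsion_free_fuchsian Gam ->
  ~ elementary Gam ->
  has_cusp Gam ->
  SL2 u ->
  forward_orbit_dense_in_NW Gam u ->
  cusp_recurrent Gam u.
Proof.
  intros HG Hne [p [Hp Hpar]] Hu Hdense; split.
  - exact (not_escaping_through_cusp Gam u HG Hu Hdense Hne).
  - destruct (cusp_frame Gam p HG Hp Hpar) as [g (Hg & HT1 & _)].
    exact (cusp_recurrent_of_unbounded_height Gam u HG Hu Hdense g Hne Hg HT1).
Qed.
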